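(* Let $\mathcal A_+,\mathcal A_-\subseteq\mathbb R^n$ be disjoint finite sets with $\mathcal A=\mathcal A_+\cup\mathcal A_-$ full dimensional. Let $\Lambda=\{\Delta_1,\dots,\Delta_r\}$ be full-dimensional simplices with vertices in $\mathcal A_+$ such that $\mathcal A_-\subseteq\Delta_j$ for all $j\in[r]$, and let $\Gamma_j$ be the smallest face of $\Delta_j$ containing $\mathcal A_-$. Let $f\in\mathcal S(\mathcal A_+,\mathcal A_-)$ have nonsigned coefficients $c\in\mathbb R^{\mathcal A}_{>0}$ and suppose $\mathbb 1\in\operatorname{Sing}_{>0}(f)$. Let $\mathcal Z=\mathcal Z(\Lambda,c)$. Then: (i) $\mathcal Z\subseteq\{\delta\in\mathbb R^r:\sum_{i=1}^r\delta_i=1\}$. (ii) If $\delta\in\mathcal Z\cap\mathbb R^r_{\ge0}$ and $J=\{j\in[r]:\delta_j>0\}$, then for each $j\in J$ the signomial $$q_j=\sum_{a\in\operatorname{vertices}(\Gamma_j)}\delta_j\Big(\sum_{b\in\mathcal A_-}\lambda^b_{a,j}c_b\Big)x^a-\sum_{b\in\mathcal A_-}\delta_jc_bx^b$$ has signed support $(\operatorname{vertices}(\Gamma_j),\mathcal A_-)$, which is an extended circuit, and satisfies $\mathbb 1\in\operatorname{Sing}_{>0}(q_j)$; moreover $f=\sum_{j\in J}q_j$, and $f$ is SONC.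
   Context: A signomial with signed support $(\mathcal A_+,\mathcal A_-)$ is $f(x)=\sum_{a\in\mathcal A_+}c_ax^a-\sum_{b\in\mathcal A_-}c_bx^b$ on $\mathbb R^n_{>0}$ with all $c_a,c_b>0$ (nonsigned coefficients); $\mathcal S(\mathcal A_+,\mathcal A_-)$ is the set of these. Full dimensional: $\dim\operatorname{conv}(\mathcal A)=n$. $\operatorname{Sing}_{>0}(f)$ is the set of $x\in\mathbb R^n_{>0}$ with $f(x)=x_1\partial_{x_1}f(x)=\dots=x_n\partial_{x_n}f(x)=0$; $\mathbb 1=(1,\dots,1)$. $\lambda^b_{a,k}\in[0,1]$ ($a\in\operatorname{vertices}(\Delta_k)$) are the barycentric coordinates of $b$ w.r.t. the vertices of $\Delta_k$, i.e. $b=\sum_a\lambda^b_{a,k}a$, $\sum_a\lambda^b_{a,k}=1$. $\mathcal Z(\Lambda,c)\subseteq\mathbb R^r$ is the solution set of the linear system in $\delta_1,\dots,\delta_r$: $c_a=\sum_{k:\,a\in\operatorname{vertices}(\Delta_k)}\delta_k\big(\sum_{b\in\mathcal A_-}\lambda^b_{a,k}c_b\big)$ for all $a\in\mathcal A_+$. $(\mathcal B_+,\mathcal B_-)$ is an extended circuit if $\#(\mathcal B_+\cup\mathcal B_-)=\#\mathcal B_+=1$ or $\operatorname{conv}(\mathcal B_+\cup\mathcal B_-)$ is a simplex with vertex set $\mathcal B_+$; a circuit if moreover (in the second case) $\#\mathcal B_-=1$ and $\mathcal B_-\subseteq\operatorname{relint}\operatorname{conv}(\mathcal B_+)$. A signomial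 is SONC if it is a finite sum of copositive signomials whose signed supports are circuits. *)

From HB Require Import structures.
From mathcomp Require Import all_boot all_order all_algebra.
From mathcomp Require Import all_classical all_reals all_analysis.
Set Implicit Arguments. Unset Strict Implicit. Unset Printing Implicit Defensive.
Import Order.TTheory GRing.Theory Num.Theory.
Import numFieldNormedType.Exports.
Local Open Scope classical_set_scope.
Local Open Scope ring_scope.

Section Signomials.
Variables (R : realType) (n : nat).
Local Notation vec := 'rV[R]_n.

Definition dotv (w y : vec) : R := \sum_(i < n) w 0 i * y 0 i.

Definition mono (x a : vec) : R := \prod_(i < n) (x 0 i) `^ (a 0 i).

Definition posv (x : vec) : Prop := forall i, 0 < x 0 i.

Definition onev : vec := const_mx 1.

Definition signomial := seq (R * vec).
Definition coef (g : signomial) (a : vec) : R :=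
  \sum_(t <- g) (if t.2 == a then t.1 else 0).
Definition seval (g : signomial) (x : vec) : R :=
  \sum_(t <- g) t.1 * mono x t.2.
Definition pos_supp (g : signomial) : set vec := [set a | 0 < coef g a].
Definition neg_supp (g : signomial) : set vec := [set a | coef g a < 0].

Definition sig_of (Ap Am : seq vec) (c : vec -> R) : signomial :=
  [seq (c a, a) | a <- Ap] ++ [seq (- c b, b) | b <- Am].

Definition Sing_pos (g : signomial) (x : vec) : Prop :=
  posv x /\ seval g x = 0 /\
  forall i : 'I_n, x 0 i * derive (seval g) x (delta_mx 0 i) = 0.

Definition copositive (g : signomial) : Prop :=
  forall x, posv x -> 0 <= seval g x.

Definition cvxhull (S : set vec) : set vec :=
  [set x | exists (s : seq vec) (mu : vec -> R),
     (forall a, a \in s -> S a) /\ (forall a, a \in s -> 0 <= mu a) /\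
     \sum_(a <- s) mu a = 1 /\ \sum_(a <- s) mu a *: a = x].
Definition affhull (S : set vec) : set vec :=
  [set x | exists (s : seq vec) (mu : vec -> R),
     (forall a, a \in s -> S a) /\
     \sum_(a <- s) mu a = 1 /\ \sum_(a <- s) mu a *: a = x].

Definition aff_indep (V : seq vec) : Prop :=
  uniq V /\ forall mu : vec -> R,
    \sum_(a <- V) mu a = 0 -> \sum_(a <- V) mu a *: a = 0 ->
    forall a, a \in V -> mu a = 0.

Definition relint (C : set vec) : set vec :=
  [set x | C x /\ exists e : R, 0 < e /\
     forall y, affhull C y -> `|y - x| < e -> C y].

(* faces of a set P (exposed by a valid linear inequality; includes P, empty) *)
Definition is_face (P F : set vec) : Prop :=
  exists (w : vec) (t : R), (forall y, P y -> dotv w y <= t) /\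
    F = P `&` [set y | dotv w y = t].

Definition smallest_face (P S : set vec) : set vec :=
  [set x | forall F, is_face P F -> S `<=` F -> F x].

Definition is_vertex (C : set vec) (v : vec) : Prop :=
  C v /\ forall y z (t : R), C y -> C z -> 0 < t < 1 ->
    v = t *: y + (1 - t) *: z -> y = z.
Definition vertices (C : set vec) : set vec := [set v | is_vertex C v].

Definition is_simplex (P : set vec) : Prop :=
  exists V : seq vec, aff_indep V /\ P = cvxhull [set a | a \in V].

Definition one_point_case (Bp Bm : set vec) : Prop :=
  exists v, Bp `|` Bm = [set v] /\ Bp = [set v].
Definition simplex_case (Bp Bm : set vec) : Prop :=
  is_simplex (cvxhull (Bp `|` Bm)) /\ vertices (cvxhull (Bp `|` Bm)) = Bp.
Definition ext_circuit (Bp Bm : set vec) : Prop :=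
  one_point_case Bp Bm \/ simplex_case Bp Bm.
Definition circuit (Bp Bm : set vec) : Prop :=
  one_point_case Bp Bm \/
  (simplex_case Bp Bm /\ (exists b, Bm = [set b]) /\ Bm `<=` relint (cvxhull Bp)).

Definition SONC (f : signomial) : Prop :=
  exists gs : seq signomial,
    (forall g, g \in gs -> copositive g /\ circuit (pos_supp g) (neg_supp g)) /\
    forall a, coef f a = \sum_(g <- gs) coef g a.

Definition is_bary (V : seq vec) (b : vec) (mu : vec -> R) : Prop :=
  \sum_(a <- V) mu a = 1 /\ \sum_(a <- V) mu a *: a = b.

Definition Zset (r : nat) (Ap Am : seq vec) (V : 'I_r -> seq vec)
  (lam : 'I_r -> vec -> vec -> R) (c : vec -> R) : set ('I_r -> R) :=
  [set delta | forall a, a \in Ap ->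
     c a = \sum_(k < r | a \in V k) delta k * (\sum_(b <- Am) lam k b a * c b)].

Definition Gam (Vj Am : seq vec) : set vec :=
  smallest_face (cvxhull [set a | a \in Vj]) [set b | b \in Am].

Definition qsig (Vj Am : seq vec) (lamj : vec -> vec -> R) (c : vec -> R)
  (dj : R) : signomial :=
  [seq (dj * (\sum_(b <- Am) lamj b a * c b), a)
     | a <- Vj & `[< is_vertex (Gam Vj Am) a >]] ++
  [seq (- (dj * c b), b) | b <- Am].

End Signomials.

From HB Require Import structures.
From mathcomp Require Import all_boot all_order all_algebra.
From mathcomp Require Import all_classical all_reals all_analysis.
From mathcomp Require Import ring lra.
Import Order.TTheory GRing.Theory Num.Theory.
Import numFieldNormedType.Exports.
Set Implicit Arguments. Unset Strict Implicit. Unset Printing Implicit Defensive.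
Local Open Scope classical_set_scope.
Local Open Scope ring_scope.

(* Summing the defining equations of Z(Lambda, c) over A_+ and using f(1) = 0, i.e.
   sum_{A_+} c = sum_{A_-} c > 0, forces sum_j delta_j = 1, and the same equations split
   the coefficients of f as sum_j q_j.  The smallest face Gamma_j of Delta_j containing
   A_- is the hull of the vertices a of Delta_j with lambda^b_{a,j} > 0 for some b in A_-;
   this gives the signed support of q_j and, since b = sum_a lambda^b_{a,j} a, the
   singular point 1 of q_j.  Finally q_j is the sum over b in A_- of
   delta_j c_b (sum_a lambda^b_{a,j} x^a - x^b): each summand is nonnegative by weighted
   AM-GM, and its support is a circuit because b lies in the relative interior of the
   simplex spanned by the a with lambda^b_{a,j} > 0. *)

Section CircuitDecomposition.
Variables (R : realType) (n : nat).
Local Notation vec := 'rV[R]_n.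
Local Notation hull W := (cvxhull [set a | a \in W]).

Definition convex_coords (W : seq vec) (y : vec) (mu : vec -> R) : Prop :=
  (forall a, a \in W -> 0 <= mu a) /\ is_bary W y mu.

Lemma sum_count_mem (V : nmodType) (W s : seq vec) (F : vec -> V) :
  uniq W -> {subset s <= W} ->
  \sum_(x <- s) F x = \sum_(a <- W) F a *+ count_mem a s.
Proof.
move=> uW; elim: s => [|x s IH] sW.
  by rewrite big_nil big1 // => a _; rewrite mulr0n.
rewrite big_cons IH; last by move=> y ys; apply: sW; rewrite inE ys orbT.
have xW : x \in W by apply: sW; rewrite inE eqxx.
under [RHS]eq_bigr do rewrite /= mulrnDr.
rewrite big_split /=; congr (_ + _).
rewrite (bigD1_seq x) //= eqxx mulr1n big1_seq ?addr0 // => a /andP[ax _].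
by rewrite eq_sym (negbTE ax) mulr0n.
Qed.

Lemma cvxhull_coords (W : seq vec) y : uniq W -> hull W y ->
  exists mu, convex_coords W y mu.
Proof.
move=> uW [s [mu [sW [mu0 [mu1 muy]]]]].
have sW' : {subset s <= W} by move=> a /sW.
exists (fun a => (count_mem a s)%:R * mu a); split; [|split].
- move=> a _; have [as_|anS] := boolP (a \in s); first by rewrite mulr_ge0 ?mu0.
  by rewrite (count_memPn anS) mul0r.
- rewrite -[RHS]mu1 (sum_count_mem mu uW sW').
  by apply: eq_bigr => a _; rewrite mulr_natl.
- rewrite -muy (sum_count_mem (fun a => mu a *: a) uW sW').
  by apply: eq_bigr => a _; rewrite scalerMnl mulr_natl.
Qed.

Lemma convex_coords_hull (W : seq vec) y mu : convex_coords W y mu -> hull W y.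
Proof. by move=> [mu0 [mu1 muy]]; exists W, mu. Qed.

Lemma cvxhull_sub (S T : set vec) : S `<=` T -> cvxhull S `<=` cvxhull T.
Proof.
by move=> ST y [s [mu [sS cmu]]]; exists s, mu; split=> // a /sS /ST.
Qed.

Lemma convex_coords_indicator (W : seq vec) v : uniq W -> v \in W ->
  convex_coords W v (fun a => (a == v)%:R).
Proof.
move=> uW vW; split; [by move=> a _; rewrite ler0n | split].
- rewrite (bigD1_seq v) //= eqxx big1_seq ?addr0 // => a /andP[av _].
  by rewrite (negbTE av).
- rewrite (bigD1_seq v) //= eqxx scale1r big1_seq ?addr0 // => a /andP[av _].
  by rewrite (negbTE av) scale0r.
Qed.

Lemma hull_mem (W : seq vec) a : uniq W -> a \in W -> hull W a.
Proof. by move=> uW aW; apply/convex_coords_hull/convex_coords_indicator. Qed.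

Lemma hull_combination (W s : seq vec) (nu : vec -> R) : uniq W ->
  (forall p, p \in s -> hull W p) ->
  exists mu : vec -> R,
    ((forall p, p \in s -> 0 <= nu p) -> forall a, a \in W -> 0 <= mu a) /\
    \sum_(a <- W) mu a = \sum_(p <- s) nu p /\
    \sum_(a <- W) mu a *: a = \sum_(p <- s) nu p *: p.
Proof.
move=> uW; elim: s => [|p s IH] sW.
  exists (fun=> 0); split; first by [].
  by rewrite !big_nil !big1 // => a _; rewrite scale0r.
have [|mu [mu0 [mu1 muy]]] := IH; first by move=> q qs; apply: sW; rewrite inE qs orbT.
have [k [k0 [k1 ky]]] := cvxhull_coords uW (sW p (mem_head p s)).
exists (fun a => nu p * k a + mu a); split; [|split].
- move=> nu0 a aW; rewrite addr_ge0 ?mulr_ge0 ?k0 ?nu0 ?mem_head //.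
  by apply: mu0 => // q qs; rewrite nu0 // inE qs orbT.
- by rewrite big_split /= -mulr_sumr k1 mulr1 mu1 big_cons.
- rewrite big_cons -muy -ky scaler_sumr -big_split /=.
  by apply: eq_bigr => a _; rewrite scalerDl scalerA.
Qed.

Lemma cvxhull_setU_hull (W : seq vec) (B : set vec) : uniq W ->
  B `<=` hull W -> cvxhull ([set a | a \in W] `|` B) = hull W.
Proof.
move=> uW BW; apply/seteqP; split; last by apply: cvxhull_sub => a; left.
move=> y [s [mu [sWB [mu0 [mu1 <-]]]]].
have sW : forall p, p \in s -> hull W p.
  by move=> p /sWB [/(hull_mem uW) | /BW].
have [nu [nu0 [nu1 nuy]]] := hull_combination mu uW sW.
by rewrite -nuy; apply: (@convex_coords_hull _ _ nu); split; [exact: nu0 | split; rewrite ?nu1].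
Qed.



Lemma is_bary_eq (W : seq vec) y (mu nu : vec -> R) : aff_indep W ->
  is_bary W y mu -> is_bary W y nu -> forall a, a \in W -> mu a = nu a.
Proof.
move=> [_ AW] [mu1 muy] [nu1 nuy] a aW; apply/eqP; rewrite -subr_eq0; apply/eqP.
apply: (AW (fun a => mu a - nu a)) => //; first by rewrite sumrB mu1 nu1 subrr.
by under eq_bigr do rewrite scalerBl; rewrite sumrB muy nuy subrr.
Qed.

Lemma is_bary_ge0 (W : seq vec) y mu : aff_indep W -> hull W y ->
  is_bary W y mu -> forall a, a \in W -> 0 <= mu a.
Proof.
move=> AW /(cvxhull_coords AW.1) [nu [nu0 bnu]] bmu a aW.
by rewrite (is_bary_eq AW bmu bnu aW) nu0.
Qed.

Lemma aff_indep_filter (W : seq vec) (P : pred vec) :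
  aff_indep W -> aff_indep [seq a <- W | P a].
Proof.
move=> [uW AW]; split; first exact: filter_uniq.
move=> mu s0 s1 a; rewrite mem_filter => /andP[Pa aW].
have := AW (fun b => if P b then mu b else 0).
rewrite -big_mkcond -big_filter s0 => /(_ erefl).
under eq_bigr do rewrite (fun_if (fun k => k *: _)) scale0r.
by rewrite -big_mkcond -big_filter s1 => /(_ erefl a aW); rewrite Pa.
Qed.

Lemma sum_filter_eq (X : nmodType) (W : seq vec) (P : pred vec) (F : vec -> X) :
  (forall a, a \in W -> ~~ P a -> F a = 0) ->
  \sum_(a <- [seq a <- W | P a]) F a = \sum_(a <- W) F a.
Proof.
move=> F0; rewrite big_filter big_mkcond /=; apply: eq_big_seq => a aW.
by case: ifP => // /negbT /(F0 a aW) ->.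
Qed.

Lemma psumr_seq_eq0 (s : seq vec) (P : pred vec) (F : vec -> R) :
  (forall a, a \in s -> 0 <= F a) -> \sum_(a <- s | P a) F a = 0 ->
  forall a, a \in s -> P a -> F a = 0.
Proof.
move=> F0 /eqP; rewrite big_seq_cond psumr_eq0 => [/allP FP a aS Pa|a /andP[aS _]].
  by have := FP a aS; rewrite aS Pa => /eqP.
exact: F0.
Qed.

Lemma hull_filterP (W : seq vec) (P : pred vec) y : uniq W ->
  hull [seq a <- W | P a] y <->
  exists2 mu, convex_coords W y mu & forall a, a \in W -> ~~ P a -> mu a = 0.
Proof.
move=> uW; split.
- move=> /(cvxhull_coords (filter_uniq _ uW)) [mu [mu0 [mu1 muy]]].
  exists (fun a => if P a then mu a else 0); last by move=> a _ /negbTE ->.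
  split; [|split].
  + by move=> a aW; case: ifP => Pa //; rewrite mu0 // mem_filter Pa.
  + by rewrite -big_mkcond -big_filter.
  + rewrite -muy [RHS]big_filter [RHS]big_mkcond; apply: eq_bigr => a _.
    by case: ifP; rewrite ?scale0r.
- move=> [mu [mu0 [mu1 muy]] mu00]; apply: (@convex_coords_hull _ _ mu).
  split; first by move=> a; rewrite mem_filter => /andP[_ /mu0].
  split; first by rewrite sum_filter_eq.
  by rewrite -muy sum_filter_eq // => a aW nPa; rewrite mu00 ?scale0r.
Qed.

Lemma convex_coords_le1 (W : seq vec) y mu v : uniq W -> v \in W ->
  convex_coords W y mu -> mu v <= 1.
Proof.
move=> uW vW [mu0 [mu1 _]]; rewrite -mu1 (bigD1_seq v) //= lerDl.
by rewrite big_seq_cond sumr_ge0 // => b /andP[bW _]; apply: mu0.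
Qed.


Lemma convex_coords_unit (W : seq vec) y mu v : uniq W -> v \in W ->
  convex_coords W y mu -> mu v = 1 -> y = v.
Proof.
move=> uW vW [mu0 [mu1 <-]] muv.
have rest0 : \sum_(a <- W | a != v) mu a = 0.
  by apply: (addrI 1); rewrite -[in LHS]muv -bigD1_seq // mu1 addr0.
rewrite (bigD1_seq v) //= muv scale1r big1_seq ?addr0 // => a /andP[av aW].
by rewrite (psumr_seq_eq0 mu0 rest0 aW av) scale0r.
Qed.

Lemma is_vertex_hull_mem (W : seq vec) v : uniq W -> is_vertex (hull W) v -> v \in W.
Proof.
move=> uW [/(cvxhull_coords uW) [mu cmu] vext]; have [mu0 [mu1 muv]] := cmu.
have : \sum_(a <- W | a \in W) mu a != 0 by rewrite -big_seq mu1 oner_neq0.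
rewrite psumr_neq0 // => /hasP[a aW /andP[_ mua]].
have [mua1|mua_ne1] := eqVneq (mu a) 1.
  by rewrite (convex_coords_unit uW aW cmu mua1).
have lt1 : mu a < 1 by rewrite lt_neqAle mua_ne1 (convex_coords_le1 uW aW cmu).
have ne0 : 1 - mu a != 0 by rewrite subr_eq0 eq_sym.
pose nu b := if b != a then mu b / (1 - mu a) else 0.
have rest : \sum_(b <- W | b != a) mu b = 1 - mu a.
  by rewrite -mu1 (bigD1_seq a) //= addrC addrK.
have cnu : convex_coords W (\sum_(b <- W) nu b *: b) nu.
  split; [|split=> //].
  - move=> b bW; rewrite /nu; case: ifP => // _.
    by rewrite divr_ge0 ?mu0 // subr_ge0 ltW.
  - by rewrite /nu -big_mkcond /= -mulr_suml rest divff.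
have ev : v = mu a *: a + (1 - mu a) *: \sum_(b <- W) nu b *: b.
  rewrite -muv (bigD1_seq a) //= scaler_sumr big_mkcond /=; congr (_ + _).
  apply: eq_bigr => b _; rewrite /nu; case: ifP => _; last by rewrite scale0r scaler0.
  by rewrite scalerA mulrCA divff ?mulr1.
have az := vext a _ (mu a) (hull_mem uW aW) (convex_coords_hull cnu)
  (introT andP (conj mua lt1)) ev.
by rewrite ev -az -scalerDl addrC subrK scale1r.
Qed.

Lemma mem_is_vertex_hull (W : seq vec) v : aff_indep W -> v \in W ->
  is_vertex (hull W) v.
Proof.
move=> AW vW; have uW := AW.1; split; first exact: hull_mem.
move=> y z t /(cvxhull_coords uW) [my cmy] /(cvxhull_coords uW) [mz cmz].
move=> /andP[t0 t1] ev; have [_ [my1 myy]] := cmy; have [_ [mz1 mzz]] := cmz.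
have bv : is_bary W v (fun a => t * my a + (1 - t) * mz a).
  split; first by rewrite big_split /= -!mulr_sumr my1 mz1; ring.
  rewrite ev -myy -mzz !scaler_sumr -big_split /=.
  by apply: eq_bigr => a _; rewrite scalerDl !scalerA.
have := is_bary_eq AW bv (convex_coords_indicator uW vW).2 vW.
rewrite eqxx /= => e.
have hy := convex_coords_le1 uW vW cmy; have hz := convex_coords_le1 uW vW cmz.
have ey : my v = 1 by nra.
have ez : mz v = 1 by nra.
by rewrite (convex_coords_unit uW vW cmy ey) (convex_coords_unit uW vW cmz ez).
Qed.

Lemma vertices_hull (W : seq vec) : aff_indep W -> vertices (hull W) = [set a | a \in W].
Proof.
move=> AW; apply/seteqP; split => v; first exact: is_vertex_hull_mem AW.1.
exact: mem_is_vertex_hull.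
Qed.

Lemma simplex_case_hull (W : seq vec) (B : set vec) : aff_indep W ->
  B `<=` hull W -> simplex_case [set a | a \in W] B.
Proof.
move=> AW BW; rewrite /simplex_case (cvxhull_setU_hull AW.1 BW).
by split; [exists W | exact: vertices_hull].
Qed.

(* Row [i] of [homog_mx V] is [(1, V_i)]; for [n.+1] affinely independent points it is
   invertible, and [(1, y) * (homog_mx V)^-1] lists the barycentric coordinates of [y]. *)
Definition points_mx (V : seq vec) : 'M[R]_(n.+1, n) := \matrix_(i, k) (nth 0 V i) 0 k.
Definition homog_mx (V : seq vec) : 'M[R]_(n.+1) :=
  row_mx (const_mx 1 : 'cV[R]_(n.+1)) (points_mx V).
Definition aff_coord (V : seq vec) (y a : vec) : R :=
  (row_mx (const_mx 1 : 'rV[R]_1) y *m invmx (homog_mx V)) 0 (inord (index a V)).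

Lemma big_seq_nth (X : nmodType) (V : seq vec) (G : vec -> X) : size V = n.+1 ->
  \sum_(a <- V) G a = \sum_(i < n.+1) G (nth 0 V i).
Proof. by move=> sV; rewrite (big_nth 0) sV big_mkord. Qed.

Lemma inord_index_nth (V : seq vec) (i : 'I_n.+1) : uniq V -> size V = n.+1 ->
  inord (index (nth 0 V i) V) = i.
Proof. by move=> uV sV; rewrite index_uniq ?sV // inord_val. Qed.

Lemma homog_mx_unit (V : seq vec) : aff_indep V -> size V = n.+1 ->
  homog_mx V \in unitmx.
Proof.
move=> [uV AV] sV.
have ker0 (u : 'rV[R]_(n.+1)) : u *m homog_mx V = 0 -> u = 0.
  move=> h; have : row_mx (u *m const_mx 1) (u *m points_mx V) = 0 :> 'M[R]_(1, 1 + n).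
    by rewrite -mul_mx_row; exact: h.
  move/eqP; rewrite row_mx_eq0 => /andP[/eqP u1 /eqP uW].
  pose mu a := u 0 (inord (index a V)).
  have e1 : \sum_(a <- V) mu a = 0.
    have := congr1 (fun M : 'cV[R]_1 => M 0 0) u1; rewrite /= !mxE => s.
    rewrite (big_seq_nth _ sV) /mu -[RHS]s.
    by apply: eq_bigr => i _; rewrite inord_index_nth // mxE mulr1.
  have e2 : \sum_(a <- V) mu a *: a = 0.
    rewrite (big_seq_nth _ sV); apply/rowP => k; rewrite summxE mxE.
    have := congr1 (fun M : 'rV[R]_n => M 0 k) uW; rewrite /= !mxE => s.
    by rewrite -[RHS]s; apply: eq_bigr => i _; rewrite !mxE /mu inord_index_nth.
  apply/rowP => i; rewrite mxE.
  have := AV mu e1 e2 (nth 0 V i); rewrite mem_nth ?sV // /mu inord_index_nth //.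
  exact.
rewrite -row_free_unit -kermx_eq0; apply/eqP/row_matrixP => i.
by rewrite row0; apply: ker0; apply/sub_kermxP; apply: row_sub.
Qed.

Lemma row_mx1_0 (y : vec) : (row_mx (const_mx 1 : 'rV[R]_1) y : 'rV_(n.+1)) 0 ord0 = 1.
Proof.
have -> : (ord0 : 'I_(n.+1)) = lshift n (ord0 : 'I_1) by apply: val_inj.
by apply: etrans (row_mxEl (const_mx 1 : 'rV[R]_1) y 0 ord0) _; rewrite mxE.
Qed.

Lemma row_mx1_lift (y : vec) k :
  (row_mx (const_mx 1 : 'rV[R]_1) y : 'rV_(n.+1)) 0 (lift ord0 k) = y 0 k.
Proof.
have -> : (lift ord0 k : 'I_(n.+1)) = rshift 1 k by apply: val_inj.
exact: (row_mxEr (const_mx 1 : 'rV[R]_1) y 0 k).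
Qed.

Lemma aff_coordE (V : seq vec) y a :
  aff_coord V y a = invmx (homog_mx V) 0 (inord (index a V)) +
    \sum_(k < n) y 0 k * invmx (homog_mx V) (lift ord0 k) (inord (index a V)).
Proof.
rewrite /aff_coord mxE big_ord_recl row_mx1_0 mul1r; congr (_ + _).
by apply: eq_bigr => k _; rewrite row_mx1_lift.
Qed.

Lemma is_bary_aff_coord (V : seq vec) y : aff_indep V -> size V = n.+1 ->
  is_bary V y (aff_coord V y).
Proof.
move=> AV sV; have uV := AV.1.
set u := row_mx (const_mx 1 : 'rV[R]_1) y *m invmx (homog_mx V).
have : row_mx (u *m const_mx 1) (u *m points_mx V) =
    row_mx (const_mx 1 : 'rV[R]_1) y :> 'M[R]_(1, 1 + n).
  by rewrite -mul_mx_row [_ *m _]mulmxKV // homog_mx_unit.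
move=> /eq_row_mx[u1 uW]; split.
- have := congr1 (fun M : 'rV[R]_1 => M 0 0) u1; rewrite /= !mxE => s.
  rewrite (big_seq_nth _ sV) -[RHS]s; apply: eq_bigr => i _.
  by rewrite /aff_coord inord_index_nth // [const_mx 1 i 0]mxE mulr1.
- rewrite (big_seq_nth _ sV); apply/rowP => k; rewrite summxE.
  have := congr1 (fun M : 'rV[R]_n => M 0 k) uW; rewrite /= !mxE => s.
  rewrite -[RHS]s; apply: eq_bigr => i _.
  by rewrite /aff_coord inord_index_nth // !mxE.
Qed.

Lemma aff_coord_vertex (V : seq vec) a b : aff_indep V -> size V = n.+1 ->
  a \in V -> b \in V -> aff_coord V a b = (b == a)%:R.
Proof.
move=> AV sV aV bV.
exact: is_bary_eq AV (is_bary_aff_coord a AV sV) (convex_coords_indicator AV.1 aV).2 _ bV.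
Qed.

Lemma entry_le_norm (y : vec) k : `|y 0 k| <= `|y|.
Proof.
rewrite [leRHS]/Num.norm /= mx_normrE; apply/bigmax_geP; right => /=.
by exists (0, k).
Qed.

Lemma aff_coord_lipschitz (V : seq vec) : exists2 C : R, 0 <= C &
  forall y y' a, `|aff_coord V y a - aff_coord V y' a| <= C * `|y - y'|.
Proof.
pose N := invmx (homog_mx V).
exists (\sum_(i < n.+1) \sum_(k < n) `|N (lift ord0 k) i|).
  by apply: sumr_ge0 => i _; apply: sumr_ge0.
move=> y y' a; rewrite !aff_coordE -/N opprD addrACA subrr add0r -sumrB.
set i := inord _; apply: (le_trans (ler_norm_sum _ _ _)).
rewrite mulrC (bigD1 i) //= mulrDr -[X in X <= _]addr0 lerD //; last first.
  by rewrite mulr_ge0 // sumr_ge0 // => j _; rewrite sumr_ge0.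
rewrite mulr_sumr; apply: ler_sum => k _.
rewrite -mulrBl normrM; apply: ler_wpM2r => //.
by have := entry_le_norm (y - y') k; rewrite !mxE.
Qed.

Lemma aff_interp (V : seq vec) (g : vec -> R) : aff_indep V -> size V = n.+1 ->
  exists (w : vec) (t : R), forall a, a \in V -> dotv w a = t + g a.
Proof.
move=> AV sV; pose N := invmx (homog_mx V).
exists (\row_k \sum_(b <- V) N (lift ord0 k) (inord (index b V)) * g b).
exists (- \sum_(b <- V) N 0 (inord (index b V)) * g b) => a aV.
have -> : g a = \sum_(b <- V) aff_coord V a b * g b.
  rewrite (bigD1_seq a) //= ?aff_coord_vertex ?eqxx ?mul1r //; last exact: AV.1.
  rewrite big1_seq ?addr0 // => b /andP[ba bV].
  by rewrite aff_coord_vertex // (negbTE ba) mul0r.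
under [X in _ + X]eq_bigr do rewrite aff_coordE mulrDl -/N.
rewrite big_split /= addrA addNr add0r /dotv.
under [RHS]eq_bigr do rewrite mulr_suml.
rewrite [RHS]exchange_big /=; apply: eq_bigr => k _.
rewrite mxE mulr_suml; apply: eq_bigr => b _; ring.
Qed.


Lemma dotv_sum (w : vec) (s : seq vec) (mu : vec -> R) :
  dotv w (\sum_(a <- s) mu a *: a) = \sum_(a <- s) mu a * dotv w a.
Proof.
rewrite /dotv; under eq_bigr do rewrite summxE mulr_sumr.
rewrite exchange_big /=; apply: eq_bigr => a _; rewrite mulr_sumr.
by apply: eq_bigr => k _; rewrite mxE; ring.
Qed.

Lemma face_hull_filter (V : seq vec) (P : pred vec) : aff_indep V -> size V = n.+1 ->
  is_face (hull V) (hull [seq a <- V | P a]).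
Proof.
move=> AV sV; have uV := AV.1.
have [w [t wt]] := aff_interp (fun a => if P a then 0 else -1) AV sV.
have dw mu : \sum_(a <- V) mu a = 1 ->
    dotv w (\sum_(a <- V) mu a *: a) = t - \sum_(a <- V | ~~ P a) mu a.
  move=> mu1; rewrite dotv_sum; under eq_big_seq => a aV do rewrite wt // mulrDr.
  rewrite big_split /= -mulr_suml mu1 mul1r (bigID P) /= big1 ?add0r => [|a ->].
    by rewrite -sumrN; congr (_ + _); apply: eq_bigr => a /negbTE ->; rewrite mulrN1.
  by rewrite mulr0.
exists w, t; split.
  move=> y /(cvxhull_coords uV) [mu [mu0 [mu1 <-]]].
  by rewrite dw // gerBl big_seq_cond sumr_ge0 // => a /andP[/mu0].
apply/seteqP; split => y.
  move=> /(hull_filterP _ _ uV) [mu cmu mu00]; split; first exact: convex_coords_hull cmu.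
  have [_ [mu1 <-]] := cmu; rewrite /= dw // big_seq_cond big1 ?subr0 //.
  by move=> a /andP[aV nPa]; exact: mu00.
move=> [/(cvxhull_coords uV) [mu cmu]] /=; have [mu0 [mu1 <-]] := cmu.
rewrite dw // => e; have off0 : \sum_(a <- V | ~~ P a) mu a = 0 by lra.
by apply/(hull_filterP _ _ uV); exists mu => //; exact: psumr_seq_eq0 mu0 off0.
Qed.

Lemma cvxhull_sub_face (P F S : set vec) :
  is_face P F -> cvxhull S `<=` P -> S `<=` F -> cvxhull S `<=` F.
Proof.
move=> [w [t [_ ->]]] SP SF y Sy; split; first exact: SP.
have [s [mu [sS [_ [mu1 <-]]]]] := Sy.
rewrite /= dotv_sum -[RHS]mul1r -mu1 mulr_suml; apply: eq_big_seq => a aS.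
by have [_ ->] := SF a (sS a aS).
Qed.

Lemma face_support (V : seq vec) F b lamb : uniq V -> is_face (hull V) F -> F b ->
  convex_coords V b lamb -> forall a, a \in V -> 0 < lamb a -> F a.
Proof.
move=> uV [w [t [wle ->]]] [_ wb] [l0 [l1 lb]] a aV la; split; first exact: hull_mem.
have e : \sum_(a <- V | xpredT a) lamb a * (t - dotv w a) = 0.
  under eq_bigr do rewrite mulrBr.
  by rewrite sumrB -mulr_suml l1 mul1r -dotv_sum lb wb subrr.
have ge0 c : c \in V -> 0 <= lamb c * (t - dotv w c).
  by move=> cV; rewrite mulr_ge0 ?l0 // subr_ge0; apply: wle; exact: hull_mem.
have /eqP := psumr_seq_eq0 ge0 e aV isT.
by rewrite mulf_eq0 gt_eqF //= subr_eq0 => /eqP <-.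
Qed.

Lemma coef_cat (g1 g2 : signomial R n) x : coef (g1 ++ g2) x = coef g1 x + coef g2 x.
Proof. by rewrite /coef big_cat. Qed.

Lemma sum_if_eq (X : nmodType) (s : seq vec) (F : vec -> X) x : uniq s ->
  \sum_(a <- s) (if a == x then F a else 0) = if x \in s then F x else 0.
Proof.
move=> us; case: ifP => xs.
  rewrite (bigD1_seq x) //= eqxx big1_seq ?addr0 // => a /andP[ax _].
  by rewrite (negbTE ax).
by rewrite big1_seq // => a /andP[_ aS]; case: eqP => // ax; rewrite -ax aS in xs.
Qed.

Lemma coef_map (s : seq vec) (F : vec -> R) x : uniq s ->
  coef [seq (F a, a) | a <- s] x = if x \in s then F x else 0.
Proof. by move=> us; rewrite /coef big_map sum_if_eq. Qed.

Lemma coef_single (k : R) (b x : vec) : coef [:: (k, b)] x = if b == x then k else 0.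
Proof. by rewrite /coef big_cons big_nil addr0. Qed.

Lemma coef_sig_of (Ap Am : seq vec) (c : vec -> R) x : uniq Ap -> uniq Am ->
  coef (sig_of Ap Am c) x =
    (if x \in Ap then c x else 0) + (if x \in Am then - c x else 0).
Proof. by move=> uAp uAm; rewrite coef_cat coef_map // (coef_map (fun b => - c b)). Qed.

Lemma seval_cat (g1 g2 : signomial R n) x : seval (g1 ++ g2) x = seval g1 x + seval g2 x.
Proof. by rewrite /seval big_cat. Qed.

Lemma mono_onev (a : vec) : mono (onev R n) a = 1.
Proof. by rewrite /mono big1 // => k _; rewrite mxE powR1. Qed.

Lemma posv_onev : posv (onev R n).
Proof. by move=> i; rewrite mxE ltr01. Qed.

Lemma seval_onev_map (s : seq vec) (F : vec -> R) :
  seval [seq (F a, a) | a <- s] (onev R n) = \sum_(a <- s) F a.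
Proof. by rewrite /seval big_map; apply: eq_bigr => a _; rewrite mono_onev mulr1. Qed.

Lemma mono_shift_onev (a : vec) (i : 'I_n) (h : R) :
  mono (h *: delta_mx 0 i + onev R n) a = (h + 1) `^ (a 0 i).
Proof.
rewrite /mono (bigD1 i) //= big1 ?mulr1 => [|k ki]; first by rewrite !mxE !eqxx /= mulr1.
by rewrite !mxE (negbTE ki) andbF mulr0 add0r powR1.
Qed.

Lemma is_derive_shift_powR (p : R) : is_derive (0 : R) 1 (fun h => (h + 1) `^ p) p.
Proof.
have one_gt0 : 0 < shift 1 (0 : R) by rewrite /shift /= add0r ltr01.
have := is_derive1_comp (is_derive1_powR p one_gt0) (is_derive_shift (0 : R) 1 1).
by rewrite /shift /= add0r powR1 !mulr1.
Qed.

Lemma is_derive_sum_shift_powR (g : signomial R n) (i : 'I_n) :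
  is_derive (0 : R) 1 (fun h => \sum_(t <- g) t.1 * (h + 1) `^ (t.2 0 i))
    (\sum_(t <- g) t.1 * t.2 0 i).
Proof.
have ext (f1 f2 : R -> R) df :
    is_derive (0 : R) 1 f1 df -> f1 =1 f2 -> is_derive (0 : R) 1 f2 df.
  by move=> + /funext <-.
elim: g => [|t g IH].
  by rewrite big_nil; apply: (ext (cst 0)) => h; rewrite big_nil.
rewrite big_cons.
have d := is_deriveD (is_deriveZ t.1 (is_derive_shift_powR (t.2 0 i))) IH.
by apply: (ext _ _ _ d) => h; rewrite big_cons.
Qed.

Lemma derive_seval_onev (g : signomial R n) (i : 'I_n) :
  derive (seval g) (onev R n) (delta_mx 0 i) = \sum_(t <- g) t.1 * t.2 0 i.
Proof.
case: (is_derive_sum_shift_powR g i) => _ <-.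
rewrite /derive; f_equal; f_equal; apply/funext => h /=.
have -> : seval g (h *: delta_mx 0 i + onev R n) =
    \sum_(t <- g) t.1 * (h + 1) `^ (t.2 0 i).
  by apply: eq_bigr => t _; rewrite mono_shift_onev.
rewrite add0r addr0 -[h%:A]/(h * 1) mulr1; congr (_ *: (_ - _)).
by apply: eq_bigr => t _; rewrite mono_onev powR1.
Qed.

Lemma mono_expR (x a : vec) : posv x ->
  mono x a = expR (dotv (\row_k ln (x 0 k)) a).
Proof.
move=> px; rewrite /mono /dotv expR_sum; apply: eq_bigr => k _.
by rewrite mxE /powR gt_eqF ?px // mulrC.
Qed.

Lemma expR_tangent (u v : R) : expR v * (1 + (u - v)) <= expR u.
Proof.
have -> : expR u = expR v * expR (u - v) by rewrite -expRD addrC subrK.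
by rewrite ler_wpM2l ?expR_ge0 // expR_ge1Dx.
Qed.

(* [x^a = exp <ln x, a>], and [exp] lies above its tangent at [<ln x, b>]. *)
Lemma mono_amgm (s : seq vec) (lamb : vec -> R) (b x : vec) : posv x ->
  convex_coords s b lamb -> mono x b <= \sum_(a <- s) lamb a * mono x a.
Proof.
move=> px [l0 [l1 lb]]; rewrite !mono_expR //; set l := \row_k _.
apply: (@le_trans _ _ (\sum_(a <- s) lamb a *
    (expR (dotv l b) * (1 + (dotv l a - dotv l b))))).
  under eq_bigr do rewrite mulrCA.
  rewrite -mulr_sumr; under eq_bigr do rewrite mulrDr mulr1 mulrBr.
  by rewrite big_split /= sumrB -mulr_suml l1 mul1r -dotv_sum lb subrr addr0 mulr1.
rewrite big_seq [leRHS]big_seq; apply: ler_sum => a aS.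
by rewrite ler_wpM2l ?l0 // mono_expR // expR_tangent.
Qed.

Lemma seq_pos_lb (s : seq vec) (f : vec -> R) : (forall a, a \in s -> 0 < f a) ->
  exists2 m : R, 0 < m & forall a, a \in s -> m <= f a.
Proof.
elim: s => [|a s IH] fpos; first by exists 1.
have [|m m0 mf] := IH; first by move=> b bs; rewrite fpos // inE bs orbT.
exists (Num.min (f a) m); first by rewrite lt_min m0 fpos ?mem_head.
by move=> b; rewrite inE => /orP[/eqP ->|/mf bs]; rewrite ge_min ?lexx ?bs ?orbT.
Qed.

Lemma affhull_hull_filter (V : seq vec) (P : pred vec) y : uniq V ->
  affhull (hull [seq a <- V | P a]) y ->
  exists2 mu, is_bary V y mu & forall a, a \in V -> ~~ P a -> mu a = 0.
Proof.
move=> uV [s [mu [sH [mu1 muy]]]].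
have [nu [_ [nu1 nuy]]] := hull_combination mu (filter_uniq P uV) sH.
exists (fun a => if P a then nu a else 0); last by move=> a _ /negbTE ->.
split; first by rewrite -big_mkcond -big_filter nu1 mu1.
rewrite -muy -nuy [RHS]big_filter [RHS]big_mkcond; apply: eq_bigr => a _.
by case: ifP; rewrite ?scale0r.
Qed.

Lemma convex_coords_pos (V : seq vec) b lamb :
  convex_coords V b lamb -> convex_coords [seq a <- V | 0 < lamb a] b lamb.
Proof.
move=> [l0 [l1 lb]].
have off0 a : a \in V -> ~~ (0 < lamb a) -> lamb a = 0.
  by move=> aV; rewrite -leNgt => la; apply/eqP; rewrite eq_le la l0.
split; first by move=> a; rewrite mem_filter => /andP[/ltW].
split; first by rewrite sum_filter_eq.
by rewrite -lb sum_filter_eq // => a aV /(off0 a aV) ->; rewrite scale0r.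
Qed.

(* Barycentric coordinates depend continuously on the point, so near [b] the
   positive coordinates of [b] stay positive. *)
Lemma relint_hull_pos (V : seq vec) (lamb : vec -> R) b : aff_indep V -> size V = n.+1 ->
  convex_coords V b lamb -> relint (hull [seq a <- V | 0 < lamb a]) b.
Proof.
move=> AV sV cb; have uV := AV.1; have [l0 bb] := cb.
split; first exact/convex_coords_hull/convex_coords_pos.
have [C C0 HC] := aff_coord_lipschitz V.
have [m m0 mW] : exists2 m : R, 0 < m &
    forall a, a \in [seq a <- V | 0 < lamb a] -> m <= lamb a.
  by apply: seq_pos_lb => a; rewrite mem_filter => /andP[].
exists (m / (C + 1)); split; first by rewrite divr_gt0 // ltr_wpDl.
move=> y /(affhull_hull_filter uV) [nu ynu nu0] yb.
apply/(hull_filterP _ _ uV); exists nu => //; split => // a aV.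
have := HC y b a.
rewrite (is_bary_eq AV (is_bary_aff_coord y AV sV) ynu aV).
rewrite (is_bary_eq AV (is_bary_aff_coord b AV sV) bb aV) => h.
have [la|la] := ltP 0 (lamb a); last by rewrite nu0 // -leNgt.
have hm : m <= lamb a by rewrite mW // mem_filter la.
have hCe : C * `|y - b| < m.
  apply: le_lt_trans (_ : C * (m / (C + 1)) < m); first by rewrite ler_wpM2l // ltW.
  by rewrite mulrA ltr_pdivrMr ?ltr_wpDl //; nra.
by move: h; rewrite ler_norml => /andP[h1 _]; lra.
Qed.

Definition circuit_piece (V : seq vec) (lamb : vec -> R) (k : R) (b : vec) :
  signomial R n :=
  [seq (k * lamb a, a) | a <- [seq a <- V | 0 < lamb a]] ++ [:: (- k, b)].

Section CircuitPiece.
Variables (V : seq vec) (lamb : vec -> R) (k : R) (b : vec).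
Hypotheses (AV : aff_indep V) (cb : convex_coords V b lamb).
Local Notation W := [seq a <- V | 0 < lamb a].
Local Notation p := (circuit_piece V lamb k b).

Lemma coef_circuit_piece x : coef p x =
  (if x \in V then k * lamb x else 0) + (if b == x then - k else 0).
Proof.
rewrite coef_cat coef_map ?filter_uniq ?AV.1 // coef_single mem_filter.
congr (_ + _); have [xV|] := boolP (x \in V); rewrite ?andbF ?andbT //.
case: ifP => // /negbT; rewrite -leNgt => lx.
have -> : lamb x = 0 by apply/eqP; rewrite eq_le lx cb.1.
by rewrite mulr0.
Qed.

Lemma copositive_circuit_piece : 0 <= k -> copositive p.
Proof.
move=> k0 x px; rewrite seval_cat /seval big_map big_cons big_nil addr0 /=.
under eq_bigr do rewrite -mulrA.
rewrite -mulr_sumr mulNr -mulrBr mulr_ge0 // subr_ge0.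
exact: mono_amgm px (convex_coords_pos cb).
Qed.

Hypotheses (bV : b \notin V) (k_gt0 : 0 < k).

Lemma coef_circuit_piece_sign x :
  (0 < coef p x) = (x \in W) /\ (coef p x < 0) = (x == b).
Proof.
rewrite coef_cat coef_map ?filter_uniq ?AV.1 // coef_single.
have [->|xb] := eqVneq x b.
  have /negbTE -> : b \notin W by rewrite mem_filter negb_and bV orbT.
  by rewrite add0r oppr_gt0 oppr_lt0 k_gt0 (lt_gtF k_gt0).
rewrite addr0; case: ifP => xW; last by rewrite ltxx.
have /mulr_gt0 /(_ k_gt0) lx : 0 < lamb x by move: xW; rewrite mem_filter => /andP[].
by rewrite mulrC lx (lt_gtF lx).
Qed.

Lemma circuit_circuit_piece : size V = n.+1 -> circuit (pos_supp p) (neg_supp p).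
Proof.
move=> sV; have sgn := coef_circuit_piece_sign.
have -> : pos_supp p = [set a | a \in W].
  by apply/seteqP; split => x; rewrite /pos_supp /= (sgn x).1.
have -> : neg_supp p = [set b].
  apply/seteqP; split => x; rewrite /neg_supp /= (sgn x).2; first by move/eqP.
  by move=> ->.
right; split; [|split; [by exists b|]].
  apply: simplex_case_hull; first exact: aff_indep_filter.
  by move=> y ->; exact/convex_coords_hull/convex_coords_pos.
by move=> y ->; exact: relint_hull_pos.
Qed.

End CircuitPiece.

Definition face_verts (V Am : seq vec) (lam : vec -> vec -> R) : seq vec :=
  [seq a <- V | has (fun b => 0 < lam b a) Am].

Section SmallestFace.
Variables (V Am : seq vec) (lam : vec -> vec -> R).
Hypotheses (AV : aff_indep V) (sV : size V = n.+1).
Hypothesis bary : forall b, b \in Am -> is_bary V b (lam b).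
Hypothesis lam_ge0 : forall b a, b \in Am -> a \in V -> 0 <= lam b a.
Local Notation U := (face_verts V Am lam).

Lemma lam_eq0 b a : b \in Am -> a \in V ->
  ~~ has (fun b => 0 < lam b a) Am -> lam b a = 0.
Proof.
move=> bA aV /hasPn/(_ b bA); rewrite -leNgt => h.
by apply/eqP; rewrite eq_le h lam_ge0.
Qed.

Lemma convex_coords_lam b : b \in Am -> convex_coords V b (lam b).
Proof. by move=> bA; split; [move=> a; exact: lam_ge0 | exact: bary]. Qed.

Lemma hull_face_verts b : b \in Am -> hull U b.
Proof.
move=> bA; apply/(hull_filterP _ _ AV.1); exists (lam b); first exact: convex_coords_lam.
by move=> a aV; apply: lam_eq0.
Qed.

Lemma Gam_hull : Gam V Am = hull U.
Proof.
apply/seteqP; split => x.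
  by move=> Gx; apply: Gx; [exact: face_hull_filter | move=> b /hull_face_verts].
move=> Ux F HF AmF; apply: (cvxhull_sub_face HF _ _ Ux).
  by apply: cvxhull_sub => a /=; rewrite mem_filter => /andP[].
move=> a /=; rewrite mem_filter => /andP[/hasP[b bA lb] aV].
exact: face_support AV.1 HF (AmF b bA) (convex_coords_lam bA) a aV lb.
Qed.

Lemma qsig_verts : [seq a <- V | `[< is_vertex (Gam V Am) a >]] = U.
Proof.
apply: eq_in_filter => a aV; rewrite Gam_hull.
have -> : has (fun b => 0 < lam b a) Am = (a \in U) by rewrite mem_filter aV andbT.
apply/idP/idP => [/asboolP|aU]; first exact: is_vertex_hull_mem (filter_uniq _ AV.1).
by apply/asboolP; apply: mem_is_vertex_hull aU; exact: aff_indep_filter.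
Qed.

Lemma sum_face_verts_weight (c G : vec -> R) :
  \sum_(a <- U) (\sum_(b <- Am) lam b a * c b) * G a =
  \sum_(b <- Am) c b * \sum_(a <- V) lam b a * G a.
Proof.
rewrite sum_filter_eq => [|a aV nPa]; last first.
  by rewrite big_seq big1 ?mul0r // => b bA; rewrite lam_eq0 ?mul0r.
under eq_bigr do rewrite mulr_suml.
rewrite exchange_big; apply: eq_bigr => b _; rewrite mulr_sumr.
by apply: eq_bigr => a _; ring.
Qed.

Lemma ext_circuit_Gam : ext_circuit (vertices (Gam V Am)) [set b | b \in Am].
Proof.
right; rewrite Gam_hull vertices_hull; last exact: aff_indep_filter.
by apply: simplex_case_hull; [exact: aff_indep_filter | move=> b /hull_face_verts].
Qed.

Variables (c : vec -> R) (dj : R).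
Local Notation q := (qsig V Am lam c dj).

Lemma Sing_qsig : Sing_pos q (onev R n).
Proof.
have vanish (G : vec -> R) :
    (forall b, b \in Am -> \sum_(a <- V) lam b a * G a = G b) ->
    \sum_(t <- q) t.1 * G t.2 = 0.
  move=> GA; rewrite big_cat !big_map /= qsig_verts.
  under eq_bigr do rewrite -mulrA.
  under [X in _ + X]eq_bigr do rewrite mulNr -mulrA.
  rewrite sumrN -!mulr_sumr sum_face_verts_weight -mulrBr.
  have -> : \sum_(b <- Am) c b * \sum_(a <- V) lam b a * G a = \sum_(b <- Am) c b * G b.
    by apply: eq_big_seq => b bA; rewrite GA.
  by rewrite subrr mulr0.
split; first exact: posv_onev.
split.
  rewrite /seval; under eq_bigr do rewrite mono_onev.
  apply: (vanish (fun=> 1)) => b bA.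
  by under eq_bigr do rewrite mulr1; exact: (bary bA).1.
move=> i; rewrite derive_seval_onev (vanish (fun a => a 0 i)) ?mulr0 // => b bA.
have := congr1 (fun M : vec => M 0 i) (bary bA).2; rewrite /= summxE => <-.
by apply: eq_bigr => a _; rewrite mxE.
Qed.

Hypothesis uAm : uniq Am.

Lemma coef_qsig x : coef q x =
  (if x \in V then dj * \sum_(b <- Am) lam b x * c b else 0) +
  (if x \in Am then - (dj * c x) else 0).
Proof.
rewrite /qsig qsig_verts coef_cat !coef_map ?filter_uniq //; last exact: AV.1.
congr (_ + _); rewrite mem_filter; have [xV|] := boolP (x \in V); rewrite ?andbF ?andbT //.
case: ifP => // /negbT hx; rewrite big_seq big1 ?mulr0 // => b bA.
by rewrite lam_eq0 ?mul0r.
Qed.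

Lemma coef_qsig_pieces x :
  coef q x = \sum_(b <- Am) coef (circuit_piece V (lam b) (dj * c b) b) x.
Proof.
under [RHS]eq_big_seq => b bA do rewrite (coef_circuit_piece _ AV (convex_coords_lam bA)).
rewrite coef_qsig big_split /= sum_if_eq //; congr (_ + _).
case: ifP => _; last by rewrite big1.
by rewrite mulr_sumr; apply: eq_bigr => b _; rewrite mulrA mulrAC.
Qed.

Hypotheses (disj : forall a, a \in V -> a \notin Am) (cpos : forall b, b \in Am -> 0 < c b).
Hypothesis dj_gt0 : 0 < dj.

Lemma weight_ge0 x : x \in V -> 0 <= \sum_(b <- Am) lam b x * c b.
Proof.
by move=> xV; rewrite big_seq sumr_ge0 // => b bA; rewrite mulr_ge0 ?lam_ge0 ?ltW ?cpos.
Qed.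

Lemma weight_gt0 x : x \in V ->
  (0 < \sum_(b <- Am) lam b x * c b) = has (fun b => 0 < lam b x) Am.
Proof.
move=> xV; rewrite lt_def weight_ge0 // andbT big_seq_cond psumr_neq0; last first.
  by move=> b /andP[bA _]; rewrite mulr_ge0 ?lam_ge0 ?ltW ?cpos.
by apply: eq_in_has => b bA /=; rewrite bA pmulr_lgt0 ?cpos.
Qed.

Lemma coef_qsig_sign x : (0 < coef q x) = (x \in U) /\ (coef q x < 0) = (x \in Am).
Proof.
rewrite coef_qsig mem_filter.
have [xA|xA] := boolP (x \in Am).
  have /negbTE -> : x \notin V by apply: contraL xA; exact: disj.
  have p := mulr_gt0 dj_gt0 (cpos xA).
  by rewrite add0r oppr_gt0 oppr_lt0 p (lt_gtF p) andbF.
rewrite addr0; have [xV|_] := boolP (x \in V); last by rewrite /= ltxx andbF.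
rewrite pmulr_rgt0 // weight_gt0 // andbT; split=> //.
by rewrite ltNge mulr_ge0 ?weight_ge0 // ltW.
Qed.

Lemma pos_supp_qsig : pos_supp q = vertices (Gam V Am).
Proof.
rewrite Gam_hull vertices_hull; last exact: aff_indep_filter.
by apply/seteqP; split => x; rewrite /pos_supp /= (coef_qsig_sign x).1.
Qed.

Lemma neg_supp_qsig : neg_supp q = [set b | b \in Am].
Proof. by apply/seteqP; split => x; rewrite /neg_supp /= (coef_qsig_sign x).2. Qed.

End SmallestFace.

Lemma affhull_full_nonempty (s : seq vec) : affhull [set a | a \in s] = setT -> s != [::].
Proof.
move=> full; have : affhull [set a | a \in s] 0 by rewrite full.
case: s {full} => // -[[|a s'] [mu [s's [mu1 _]]]].
  by move: mu1; rewrite big_nil => /eqP; rewrite eq_sym oner_eq0.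
by have := s's a (mem_head a s').
Qed.

Section Decomposition.
Variables (r : nat) (Ap Am : seq vec) (V : 'I_r -> seq vec).
Variables (lam : 'I_r -> vec -> vec -> R) (c : vec -> R).
Hypotheses (uAp : uniq Ap) (uAm : uniq Am) (disj : forall a, a \in Ap -> a \notin Am).
Hypotheses (AV : forall j, aff_indep (V j)) (sV : forall j, size (V j) = n.+1).
Hypothesis VAp : forall j a, a \in V j -> a \in Ap.
Hypothesis Am_hull : forall j b, b \in Am -> hull (V j) b.
Hypothesis bary : forall j b, b \in Am -> is_bary (V j) b (lam j b).
Hypothesis cpos : forall a, a \in Ap ++ Am -> 0 < c a.

Lemma lam_ge0 j b a : b \in Am -> a \in V j -> 0 <= lam j b a.
Proof. by move=> bA; exact: is_bary_ge0 (AV j) (Am_hull j bA) (bary j bA) a. Qed.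

Lemma c_Am_gt0 b : b \in Am -> 0 < c b.
Proof. by move=> bA; rewrite cpos // mem_cat bA orbT. Qed.

Lemma V_notin_Am j a : a \in V j -> a \notin Am.
Proof. by move/VAp; exact: disj. Qed.

Lemma qsig_signed_support j dj : 0 < dj ->
  let q := qsig (V j) Am (lam j) c dj in
  pos_supp q = vertices (Gam (V j) Am) /\ neg_supp q = [set b | b \in Am] /\
  ext_circuit (vertices (Gam (V j) Am)) [set b | b \in Am] /\ Sing_pos q (onev R n).
Proof.
have lj := lam_ge0 (j := j); move=> dj_gt0 q; rewrite {}/q; split; [|split; [|split]].
- exact: (pos_supp_qsig (AV j) (sV j) (bary j) lj uAm (V_notin_Am (j := j)) c_Am_gt0 dj_gt0).
- exact: (neg_supp_qsig (AV j) (sV j) (bary j) lj uAm (V_notin_Am (j := j)) c_Am_gt0 dj_gt0).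
- exact: (ext_circuit_Gam (AV j) (sV j) (bary j) lj).
- exact: (Sing_qsig (AV j) (sV j) (bary j) lj).
Qed.

Lemma sum_weight_simplex j :
  \sum_(a <- V j) \sum_(b <- Am) lam j b a * c b = \sum_(b <- Am) c b.
Proof.
rewrite exchange_big big_seq [RHS]big_seq; apply: eq_bigr => b bA.
by rewrite -mulr_suml (bary j bA).1 mul1r.
Qed.

Lemma perm_filter_V j : perm_eq [seq a <- Ap | a \in V j] (V j).
Proof.
apply: uniq_perm; [exact: filter_uniq | exact: (AV j).1 |] => a.
by rewrite mem_filter andb_idr //; exact: VAp.
Qed.

Hypothesis f_one : seval (sig_of Ap Am c) (onev R n) = 0.

Lemma sum_c_Ap_Am : \sum_(a <- Ap) c a = \sum_(b <- Am) c b.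
Proof.
move: f_one; rewrite seval_cat !seval_onev_map sumrN => /eqP.
by rewrite subr_eq0 => /eqP.
Qed.

Hypothesis A_nonempty : Ap ++ Am != [::].

Lemma sum_c_Am_gt0 : 0 < \sum_(b <- Am) c b.
Proof.
have : 0 < \sum_(a <- Ap ++ Am) c a.
  move: A_nonempty cpos; case: (Ap ++ Am) => // a s _ cs.
  have ca := cs a (mem_head a s).
  have : 0 <= \sum_(b <- s) c b.
    by rewrite big_seq sumr_ge0 // => b bs; rewrite ltW // cs // inE bs orbT.
  by rewrite big_cons; lra.
by rewrite big_cat /= sum_c_Ap_Am; lra.
Qed.

Lemma Zset_sum delta : Zset Ap Am V lam c delta -> \sum_(j < r) delta j = 1.
Proof.
move=> Z; apply: (mulIf (lt0r_neq0 sum_c_Am_gt0)); rewrite mul1r -[in RHS]sum_c_Ap_Am.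
rewrite mulr_suml [RHS]big_seq.
under [RHS]eq_bigr => a aA do rewrite (Z a aA) big_mkcond.
rewrite [RHS]exchange_big; apply: eq_bigr => j _.
rewrite -big_mkcondr -big_seq_cond -big_filter (perm_big _ (perm_filter_V j)) /=.
by rewrite -mulr_sumr sum_weight_simplex.
Qed.

Variable delta : 'I_r -> R.
Hypotheses (Z : Zset Ap Am V lam c delta) (delta_ge0 : forall j, 0 <= delta j).

Lemma coef_sig_of_qsig x : coef (sig_of Ap Am c) x =
  \sum_(j < r | 0 < delta j) coef (qsig (V j) Am (lam j) c (delta j)) x.
Proof.
have coefq j dj := coef_qsig (AV j) (sV j) (bary j) (lam_ge0 (j := j)) c dj uAm.
rewrite big_mkcond (eq_bigr (fun j => coef (qsig (V j) Am (lam j) c (delta j)) x)); last first.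
  move=> j _; case: ltP => // dj.
  have -> : delta j = 0 by apply/eqP; rewrite eq_le dj delta_ge0.
  by rewrite coefq !mul0r oppr0 !if_same addr0.
under eq_bigr do rewrite coefq.
rewrite coef_sig_of // big_split /=; congr (_ + _).
  have [xAp|xAp] := boolP (x \in Ap); first by rewrite (Z xAp) big_mkcond.
  by rewrite big1 // => j _; case: ifP => // /VAp; rewrite (negbTE xAp).
case: ifP => _; last by rewrite big1.
by rewrite sumrN -mulr_suml (Zset_sum Z) mul1r.
Qed.

Lemma SONC_sig_of : SONC (sig_of Ap Am c).
Proof.
exists (flatten [seq [seq circuit_piece (V j) (lam j b) (delta j * c b) b | b <- Am]
               | j <- [seq j <- enum 'I_r | 0 < delta j]]); split.
  move=> g /flattenP [s /mapP [j + ->] /mapP [b bA ->]].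
  rewrite mem_filter => /andP[dj _]; have cb := convex_coords_lam (bary j) (lam_ge0 (j := j)) bA.
  split; first by apply: copositive_circuit_piece cb _; rewrite mulr_ge0 ?ltW ?c_Am_gt0.
  apply: (circuit_circuit_piece (AV j) cb) (sV j); last by rewrite mulr_gt0 ?c_Am_gt0.
  by apply/negP => /V_notin_Am; rewrite bA.
move=> x; rewrite coef_sig_of_qsig big_flatten /= big_map big_filter big_enum_cond /=.
apply: eq_bigr => j _; rewrite big_map.
exact: coef_qsig_pieces (AV j) (sV j) (bary j) (lam_ge0 (j := j)) c (delta j) uAm x.
Qed.

End Decomposition.

End CircuitDecomposition.

Theorem lemma3p12 (R : realType) (n r : nat)
  (Ap Am : seq 'rV[R]_n) (V : 'I_r -> seq 'rV[R]_n)
  (lam : 'I_r -> 'rV[R]_n -> 'rV[R]_n -> R) (c : 'rV[R]_n -> R) :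
  (* A_+, A_- disjoint finite sets, A = A_+ u A_- full dimensional *)
  uniq Ap -> uniq Am -> (forall a, a \in Ap -> a \notin Am) ->
  affhull [set a | a \in Ap ++ Am] = setT ->
  (* Delta_j = cvxhull(V j): full-dimensional simplices with vertices in A_+ *)
  (forall j, aff_indep (V j) /\ size (V j) = n.+1 /\
             (forall a, a \in V j -> a \in Ap)) ->
  (forall j b, b \in Am -> cvxhull [set a | a \in V j] b) ->
  (* lam j b = barycentric coordinates of b w.r.t. the vertices of Delta_j *)
  (forall j b, b \in Am -> is_bary (V j) b (lam j b)) ->
  (forall a, a \in Ap ++ Am -> 0 < c a) ->
  (* 1 in Sing_{>0}(f) *)
  Sing_pos (sig_of Ap Am c) (onev R n) ->
  (* (i) *)
  (forall delta, Zset Ap Am V lam c delta -> \sum_(j < r) delta j = 1) /\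
  (* (ii) *)
  (forall delta, Zset Ap Am V lam c delta -> (forall j, 0 <= delta j) ->
     (forall j, 0 < delta j ->
        let q := qsig (V j) Am (lam j) c (delta j) in
        pos_supp q = vertices (Gam (V j) Am) /\
        neg_supp q = [set b | b \in Am] /\
        ext_circuit (vertices (Gam (V j) Am)) [set b | b \in Am] /\
        Sing_pos q (onev R n)) /\
     (forall a, coef (sig_of Ap Am c) a =
        \sum_(j < r | 0 < delta j) coef (qsig (V j) Am (lam j) c (delta j)) a) /\
     SONC (sig_of Ap Am c)).
Proof.
move=> uAp uAm disj /affhull_full_nonempty A_nonempty simplexV Am_hull bary cpos sing.
have AV j : aff_indep (V j) by case: (simplexV j).
have sV j : size (V j) = n.+1 by case: (simplexV j) => _ [].
have VAp j a : a \in V j -> a \in Ap by case: (simplexV j) => _ [_]; apply.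
have f_one := sing.2.1.
split=> [delta|delta Z delta_ge0]; first exact: Zset_sum.
split; [|split].
- by move=> j; exact: (qsig_signed_support uAm disj AV sV VAp Am_hull bary cpos j).
- exact: coef_sig_of_qsig.
- exact: (SONC_sig_of uAp uAm disj AV sV VAp Am_hull bary cpos f_one A_nonempty Z delta_ge0).
Qed.
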